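(* Let $T$ and $k$ be positive integers and let $p_1,\dots,p_k\in(0,1]$, with $q_i=1-p_i$. Consider blocks $i=1,\dots,k$, each of $T$ slots. In block $i$ the slot success indicators are i.i.d. Bernoulli$(p_i)$, and the blocks are independent. Block $0$ is a virtual block that is always successful and ends with a success; accordingly set $p_0=1$ and $q_0=0$. Let $Z(i)$ indicate that block $i$ contains at least one success. On the event $Z(k)=1$, define the following quantities: - $\kappa\in\{1,\dots,k\}$, such that $k-\kappa$ is the most recent block before $k$ with $Z(k-\kappa)=1$; - $W_{k-\kappa}$, the number of failure slots after the last success in block $k-\kappa$; - $X_k$, the number of failure slots before the first success in block $k$. The peak latency of the first successfully received input in block $k$ is $$\mathcal{L}^{\rm P}_{\kappa,k}=T(\kappa-1)+W_{k-\kappa}+X_k+1.$$ Then $\Theta^{\rm pl}_k:=\mathbb{E}[\mathcal{L}^{\rm P}_{\kappa,k}\mid Z(k)=1]$ equals $$\sum_{\kappa=1}^{k}(1-q_{k-\kappa}^T)\Big[\prod_{i=k-\kappa+1}^{k-1}q_i^T\Big]\Big[\frac{q_{k-\kappa}}{p_{k-\kappa}}+T\kappa\Big]-T\sum_{\kappa=1}^{k}\Big[\prod_{i=k-\kappa}^{k-1}q_i^T\Big]-T+\Big(\frac{q_k}{p_k}-\frac{Tq_k^T}{1-q_k^T}\Big)+1.$$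
   Context: Empty products equal $1$. The block-$0$ convention means block $0$ is always treated as a successful block, so $\kappa=k$ corresponds to no successful block among $1,\dots,k-1$. *)

From mathcomp Require Import all_boot all_order all_algebra.
Set Implicit Arguments. Unset Strict Implicit. Unset Printing Implicit Defensive.
Import Order.TTheory GRing.Theory Num.Theory.
Local Open Scope ring_scope.

Section Defs.
Variable R : realFieldType.

Definition pb (p : nat -> R) (i : nat) : R := if i == 0%N then 1 else p i.
Definition qb (p : nat -> R) (i : nat) : R := 1 - pb p i.

(* Outcome: success indicator of slot j in block i, for blocks 0..k
   (block 0 is the virtual block, distributed as Bernoulli(p_0 = 1)). *)
Definition outcome (k T : nat) := {ffun 'I_k.+1 * 'I_T -> bool}.

Definition weight (p : nat -> R) (k T : nat) (w : outcome k T) : R :=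
  \prod_(s : 'I_k.+1 * 'I_T) (if w s then pb p s.1 else qb p s.1).

Definition blk (k T : nat) (w : outcome k T) (i : nat) : seq bool :=
  [seq w (inord i, j) | j <- enum 'I_T].

Definition Zb (k T : nat) (w : outcome k T) (i : nat) : bool :=
  [exists j : 'I_T, w (inord i, j)].

Definition Xb (k T : nat) (w : outcome k T) (i : nat) : nat :=
  find id (blk w i).

Definition Wb (k T : nat) (w : outcome k T) (i : nat) : nat :=
  find id (rev (blk w i)).

(* kappa: the least m in 1..k-1 with Z(k-m), and k if there is none
   (block 0 is always treated as successful). *)
Definition kappa (k T : nat) (w : outcome k T) : nat :=
  (find id [seq Zb w (k - m) | m <- iota 1 k.-1]).+1.

Definition peak_latency (k T : nat) (w : outcome k T) : nat :=
  (T * (kappa w).-1 + Wb w (k - kappa w) + Xb w k + 1)%N.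

Definition Theta_pl (p : nat -> R) (k T : nat) : R :=
  (\sum_(w : outcome k T | Zb w k) weight p w * (peak_latency w)%:R) /
  (\sum_(w : outcome k T | Zb w k) weight p w).

End Defs.

(* The outcome consists of k + 1 independent blocks of T Bernoulli slots, so the
   expectation of a product of functions of distinct blocks is the product of
   their expectations.  Outcomes whose virtual block 0 contains a failure have
   weight 0; on the others, {kappa = m} /\ {Z(k)} says that blocks k - m and k
   succeed while the blocks strictly between them fail, so Z(k) L^P splits over
   m into such products, carrying the extra factors W_(k-m) and X_k.  For a
   single block, P(Z) = 1 - q^T and E[Z X] = E[Z W] = (1 - q^T) q / p - T q^T:
   X is the tail sum of the events "the first x + 1 slots fail", and W is X of
   the time-reversed block, whose law is unchanged.  Dividing by
   P(Z(k)) = 1 - q_k^T and using that sum_m (1 - q_(k-m)^T) prod_(k-m<i<k) q_i^T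
   telescopes to 1 (as q_0 = 0) gives the closed form. *)

From mathcomp Require Import all_boot all_order all_algebra.
From mathcomp Require Import zify ring.
Import Order.TTheory GRing.Theory Num.Theory.
Set Implicit Arguments. Unset Strict Implicit. Unset Printing Implicit Defensive.
Local Open Scope ring_scope.

Lemma natr_bigand (R : pzSemiRingType) (I : Type) (r : seq I) (P B : pred I) :
  (\big[andb/true]_(i <- r | P i) B i)%:R = \prod_(i <- r | P i) (B i)%:R :> R.
Proof. by apply: (big_morph (fun b : bool => b%:R : R)) => // x y; rewrite -mulnb natrM. Qed.

Lemma rev_enum_ord n : rev (enum 'I_n) = map (@rev_ord n) (enum 'I_n).
Proof.
apply: (inj_map val_inj); rewrite map_rev val_enum_ord -map_comp.
apply: (@eq_from_nth _ 0%N); first by rewrite size_rev size_iota size_map size_enum_ord.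
move=> i; rewrite size_rev size_iota => ltin.
rewrite nth_rev ?size_iota // (nth_map (Ordinal ltin)) ?size_enum_ord //=.
by rewrite nth_enum_ord // nth_iota /=; lia.
Qed.

Lemma geometric_sumS (F : fieldType) (a : F) n : a != 0 ->
  \sum_(i < n) (1 - a) ^+ i.+1 = (1 - (1 - a) ^+ n) * ((1 - a) / a).
Proof.
move=> a_neq0; under eq_bigr do rewrite exprS.
have -> : (1 - a) ^+ n = 1 - a * \sum_(i < n) (1 - a) ^+ i.
  by rewrite -[LHS](subrK 1) subrX1; ring.
by rewrite -mulr_sumr; field.
Qed.

Lemma find_eq_nth (s : seq bool) n : (n <= size s)%N ->
  (find id s == n) = nth true s n && ~~ has id (take n s).
Proof.
elim: s n => [|c s IHs] [|n] //= le_ns; first by case: c.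
by case: c; rewrite /= ?andbF // eqSS IHs.
Qed.

Lemma prod_ord_split (R : comPzSemiRingType) (H : nat -> R) a n : (a < n)%N ->
  (forall i, (i < a)%N -> H i = 1) ->
  \prod_(i < n.+1) H i = H a * \prod_(a.+1 <= i < n) H i * H n.
Proof.
move=> lt_an H1; rewrite big_ord_recr /= -(big_mkord xpredT).
rewrite (@big_cat_nat _ _ _ a) ?(ltnW lt_an) //= [X in X * _ * _]big1_seq ?mul1r.
  by rewrite big_ltn.
by move=> i /andP[_]; rewrite mem_index_iota => /andP[_ /H1].
Qed.

Lemma sum_indicator (R : pzSemiRingType) (a b c : nat) (g : nat -> R) : (a <= c < b)%N ->
  \sum_(a <= m < b) (c == m)%:R * g m = g c.
Proof.
move=> c_range; rewrite (bigD1_seq c) ?mem_index_iota ?iota_uniq //= eqxx mul1r big1 ?addr0 //.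
by move=> m; rewrite eq_sym => /negbTE ->; rewrite mul0r.
Qed.

Lemma telescope_prod_tail (R : comPzRingType) (k : nat) (Q : nat -> R) :
  \sum_(1 <= m < k.+1) (1 - Q (k - m)%N) * \prod_((k - m).+1 <= i < k) Q i =
  1 - \prod_(0 <= i < k) Q i.
Proof.
pose g m := \prod_(k - m <= i < k) Q i.
rewrite big_add1 /= (@eq_big_nat _ _ _ _ _ _ (fun m => - (g m.+1 - g m))); last first.
  move=> m /andP[_ lt_mk]; rewrite /g (@big_ltn _ _ _ (k - m.+1)) ?subnSK //; last lia.
  by rewrite opprB; ring.
by rewrite sumrN telescope_sumr // opprB /g subn0 subnn big_geq.
Qed.

Section Expectation.
Variables (R : comPzRingType) (I : finType) (P : I -> R).

Definition expectation (F : I -> R) : R := \sum_i P i * F i.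

Lemma eq_expectation F G : (forall i, F i = G i) -> expectation F = expectation G.
Proof. by move=> eqFG; apply: eq_bigr => i _; rewrite eqFG. Qed.

Lemma expectationD F G :
  expectation (fun i => F i + G i) = expectation F + expectation G.
Proof. by rewrite -big_split; apply: eq_bigr => i _; rewrite mulrDr. Qed.

Lemma expectationB F G :
  expectation (fun i => F i - G i) = expectation F - expectation G.
Proof. by rewrite -sumrB; apply: eq_bigr => i _; rewrite mulrBr. Qed.

Lemma expectationZl c F : expectation (fun i => c * F i) = c * expectation F.
Proof. by rewrite mulr_sumr; apply: eq_bigr => i _; rewrite mulrCA. Qed.

Lemma expectation_sum (J : Type) (r : seq J) (F : J -> I -> R) :
  expectation (fun i => \sum_(j <- r) F j i) = \sum_(j <- r) expectation (F j).
Proof. by rewrite /expectation; under eq_bigr do rewrite mulr_sumr; rewrite exchange_big. Qed.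

End Expectation.

Definition block_weight (R : comPzRingType) (T : nat) (a : R) (b : {ffun 'I_T -> bool}) : R :=
  \prod_j (if b j then a else 1 - a).

Section Block.
Variables (R : realFieldType) (T : nat).
Local Notation slots := {ffun 'I_T -> bool}.
Local Notation Eblock a := (@expectation R slots (block_weight a)).

Definition blockZ (b : slots) : bool := [exists j, b j].
Definition blockX (b : slots) : nat := find id [seq b j | j <- enum 'I_T].
Definition blockW (b : slots) : nat := find id (rev [seq b j | j <- enum 'I_T]).

Lemma Eblock_prod_slots a (h : 'I_T -> bool -> R) :
  Eblock a (fun b => \prod_j h j (b j)) = \prod_j (a * h j true + (1 - a) * h j false).
Proof.
transitivity (\sum_(b : slots) \prod_j ((if b j then a else 1 - a) * h j (b j))).
  by apply: eq_bigr => b _; rewrite big_split.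
rewrite -(bigA_distr_bigA (fun j (c : bool) => (if c then a else 1 - a) * h j c)).
by apply: eq_bigr => j _; rewrite big_bool addrC.
Qed.

Lemma Eblock_no_success a (P : pred 'I_T) :
  Eblock a (fun b => \prod_(j | P j) (~~ b j)%:R) = (1 - a) ^+ #|P|.
Proof.
under eq_expectation do rewrite big_mkcond.
rewrite (Eblock_prod_slots a (fun j c => if P j then (~~ c)%:R else 1)).
rewrite -prodr_const [RHS]big_mkcond; apply: eq_bigr => j _.
by rewrite unfold_in; case: (P j); rewrite /= ?mulr0 ?add0r ?mulr1 ?subrKC.
Qed.

Lemma Eblock1 a : Eblock a (fun=> 1) = 1.
Proof.
have := Eblock_no_success a pred0; rewrite card0 expr0 => {2}<-.
by apply: eq_expectation => b; rewrite big_pred0.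
Qed.

Lemma blockZ_none b : (~~ blockZ b)%:R = \prod_j (~~ b j)%:R :> R.
Proof. by rewrite /blockZ negb_exists -(big_andE xpredT) natr_bigand. Qed.

Lemma Eblock_notZ a : Eblock a (fun b => (~~ blockZ b)%:R) = (1 - a) ^+ T.
Proof.
under eq_expectation do rewrite blockZ_none.
by rewrite (Eblock_no_success a predT) cardT size_enum_ord.
Qed.

Lemma Eblock_Z a : Eblock a (fun b => (blockZ b)%:R) = 1 - (1 - a) ^+ T.
Proof.
have := expectationB (block_weight a) (fun=> 1) (fun b => (~~ blockZ b)%:R).
rewrite Eblock1 Eblock_notZ => <-.
by apply: eq_expectation => b; case: (blockZ b); rewrite /= ?subr0 ?subrr.
Qed.

Lemma blockX_gt b x : (x < T)%N ->
  (x < blockX b)%N = [forall (j : 'I_T | (j <= x)%N), ~~ b j].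
Proof.
move=> ltxT; rewrite /blockX -[(x < _)%N]negbK -leqNgt -ltnS -has_take_leq; last first.
  by rewrite size_map size_enum_ord.
rewrite -map_take has_map; apply/hasPn/forall_inP => [nb j ljx|nb j].
  apply: nb; rewrite -(mem_map val_inj) map_take val_enum_ord take_iota mem_iota.
  by rewrite /= leq_min ltn_ord ltnS ljx.
rewrite -(mem_map val_inj) map_take val_enum_ord take_iota mem_iota /= leq_min.
by case/andP => ljx _; apply: nb.
Qed.

Lemma blockX_tail_sum b :
  (blockX b)%:R = \sum_(x < T) \prod_(j : 'I_T | (j <= x)%N) (~~ b j)%:R :> R.
Proof.
have XleT : (blockX b <= T)%N.
  by rewrite -[X in (_ <= X)%N]size_enum_ord -(size_map b) find_size.
transitivity ((\sum_(x < T) (x < blockX b)%N)%N%:R : R).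
  congr (_%:R); rewrite -(big_mkord xpredT (fun x => nat_of_bool (x < blockX b)%N)).
  rewrite (@big_cat_nat _ _ _ (blockX b)) //= big_nat_cond.
  rewrite (eq_bigr (fun=> 1%N)) => [|i /andP[/andP[_ ->]]] //.
  rewrite -big_nat_cond sum_nat_const_nat subn0 muln1 big_nat_cond big1 ?addn0 //.
  by move=> i /andP[/andP[]]; rewrite leqNgt => /negbTE ->.
rewrite natr_sum; apply: eq_bigr => x _.
by rewrite blockX_gt // -big_andE natr_bigand.
Qed.

Lemma card_ord_leq x : (x < T)%N -> #|[pred j : 'I_T | (j <= x)%N]| = x.+1.
Proof.
move=> ltxT; rewrite -sum1_card.
transitivity (\sum_(j < T | xpredT j && (j < x.+1)%N) 1)%N; first exact: eq_bigl.
by rewrite -(big_ord_widen_cond _ xpredT (fun=> 1%N) ltxT) sum1_card card_ord.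
Qed.

Lemma Eblock_X a : Eblock a (fun b => (blockX b)%:R) = \sum_(x < T) (1 - a) ^+ x.+1.
Proof.
under eq_expectation do rewrite blockX_tail_sum.
rewrite expectation_sum; apply: eq_bigr => x _.
by rewrite Eblock_no_success card_ord_leq.
Qed.

Lemma blockX_noZ b : ~~ blockZ b -> blockX b = T.
Proof.
move=> /existsPn noZ; rewrite /blockX hasNfind; first by rewrite size_map size_enum_ord.
by rewrite has_map; apply/hasPn => j _; apply: noZ.
Qed.

Lemma Eblock_ZX a : a != 0 ->
  Eblock a (fun b => (blockZ b)%:R * (blockX b)%:R) =
  (1 - (1 - a) ^+ T) * ((1 - a) / a) - T%:R * (1 - a) ^+ T.
Proof.
move=> a_neq0.
have ZX b : (blockZ b)%:R * (blockX b)%:R = (blockX b)%:R - T%:R * (~~ blockZ b)%:R :> R.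
  by case: (boolP (blockZ b)) => [_|/blockX_noZ ->]; rewrite /= ?mul1r ?mulr0 ?subr0 ?mul0r ?mulr1 ?subrr.
under eq_expectation do rewrite ZX.
by rewrite expectationB expectationZl Eblock_X Eblock_notZ geometric_sumS.
Qed.

Definition rev_slots (b : slots) : slots := [ffun j => b (rev_ord j)].

Lemma rev_slotsK : involutive rev_slots.
Proof. by move=> b; apply/ffunP => j; rewrite !ffunE rev_ordK. Qed.

Lemma blockZ_rev b : blockZ (rev_slots b) = blockZ b.
Proof.
apply/existsP/existsP => -[j bj]; exists (rev_ord j); rewrite ?ffunE // in bj *.
by rewrite rev_ordK.
Qed.

Lemma blockW_rev b : blockW b = blockX (rev_slots b).
Proof.
rewrite /blockW /blockX -map_rev rev_enum_ord -map_comp.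
by congr find; apply: eq_map => j; rewrite ffunE.
Qed.

Lemma Eblock_rev a F : Eblock a (fun b => F (rev_slots b)) = Eblock a F.
Proof.
rewrite [RHS](reindex_inj (inv_inj rev_slotsK)); apply: eq_bigr => b _.
by congr (_ * _); rewrite /block_weight (reindex_inj rev_ord_inj); apply: eq_bigr => j _; rewrite ffunE.
Qed.

Lemma Eblock_ZW a : a != 0 ->
  Eblock a (fun b => (blockZ b)%:R * (blockW b)%:R) =
  (1 - (1 - a) ^+ T) * ((1 - a) / a) - T%:R * (1 - a) ^+ T.
Proof.
move=> a_neq0; rewrite -Eblock_ZX // -[RHS]Eblock_rev.
by apply: eq_expectation => b; rewrite blockZ_rev blockW_rev.
Qed.

End Block.

Section Outcomes.
Variables (R : realFieldType) (T k : nat) (p : nat -> R).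
Local Notation slots := {ffun 'I_T -> bool}.
Local Notation Eblock a := (@expectation R slots (block_weight a)).
Local Notation Zr := (fun b : slots => (blockZ b)%:R : R).
Local Notation ZWr := (fun b : slots => (blockZ b)%:R * (blockW b)%:R : R).
Local Notation ZXr := (fun b : slots => (blockZ b)%:R * (blockX b)%:R : R).
Local Notation Eout := (@expectation R (outcome k T) (@weight R p k T)).

Definition block (w : outcome k T) (i : nat) : slots := [ffun j => w (inord i, j)].

Lemma Zb_block w i : Zb w i = blockZ (block w i).
Proof. by apply: eq_existsb => j; rewrite ffunE. Qed.

Lemma Xb_block w i : Xb w i = blockX (block w i).
Proof. by congr find; apply: eq_map => j; rewrite ffunE. Qed.

Lemma Wb_block w i : Wb w i = blockW (block w i).
Proof. by congr (find _ (rev _)); apply: eq_map => j; rewrite ffunE. Qed.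

Lemma weight_blocks w : weight p w = \prod_(i < k.+1) block_weight (pb p i) (block w i).
Proof.
transitivity (\prod_(i < k.+1) \prod_(j < T) (if w (i, j) then pb p i else qb p i)).
  by rewrite pair_big; apply: eq_bigr => -[i j].
by apply: eq_bigr => i _; apply: eq_bigr => j _; rewrite ffunE inord_val.
Qed.

Lemma expect_blocks (F : nat -> slots -> R) :
  Eout (fun w => \prod_(i < k.+1) F i (block w i)) =
  \prod_(i < k.+1) Eblock (pb p i) (F i).
Proof.
pose of_blocks (f : {ffun 'I_k.+1 -> slots}) : outcome k T := [ffun s => f s.1 s.2].
have block_of f (i : 'I_k.+1) : block (of_blocks f) i = f i.
  by apply/ffunP => j; rewrite !ffunE inord_val.
rewrite /expectation (reindex of_blocks); last first.
  exists (fun w => [ffun i : 'I_k.+1 => block w i]) => [f _|w _]; apply/ffunP.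
    by move=> i; rewrite ffunE block_of.
  by move=> [i j]; rewrite !ffunE inord_val.
rewrite bigA_distr_bigA; apply: eq_bigr => f _.
by rewrite weight_blocks -big_split; apply: eq_bigr => i _; rewrite block_of.
Qed.

Lemma weight_eq0 (w : outcome k T) : (0 < T)%N -> ~~ Zb w 0 -> weight p w = 0.
Proof.
move=> T_gt0 /existsPn noZ0; rewrite weight_blocks (bigD1 ord0) //= /block_weight.
by rewrite (bigD1 (Ordinal T_gt0)) //= ffunE (negbTE (noZ0 _)) /qb /pb subrr !mul0r.
Qed.

Lemma kappa_eq (w : outcome k T) m : Zb w 0 -> (1 <= m <= k)%N ->
  (kappa w == m) = Zb w (k - m) && all (fun i => ~~ Zb w i) (index_iota (k - m).+1 k).
Proof.
case: m => // m Z0 /andP[_ lt_mk].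
rewrite /kappa eqSS find_eq_nth ?size_map ?size_iota; last lia.
congr (_ && _).
  case: (ltnP m k.-1) => [lt_m|ge_m].
    by rewrite (nth_map 0%N) ?size_iota // nth_iota // add1n.
  by rewrite nth_default ?size_map ?size_iota // (_ : k - m.+1 = 0)%N //; lia.
rewrite -map_take take_iota (_ : minn m k.-1 = m); last lia.
have -> : index_iota (k - m.+1).+1 k = rev [seq k - j | j <- iota 1 m]%N.
  apply: (@eq_from_nth _ 0%N); first by rewrite /index_iota size_rev !size_map !size_iota; lia.
  rewrite /index_iota size_iota => i lt_i.
  by rewrite nth_rev ?size_map ?size_iota ?(nth_map 0%N) ?size_iota ?nth_iota; lia.
by rewrite all_rev all_map has_map -all_predC; apply: eq_all => j.
Qed.

Definition kappa_factor (F G : slots -> R) (m i : nat) (b : slots) : R :=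
  if (i < k - m)%N then 1 else if (i == k - m)%N then F b
  else if (i < k)%N then (~~ blockZ b)%:R else G b.

Section KappaFactor.
Variables (F G : slots -> R) (m : nat).
Hypothesis m_range : (1 <= m <= k)%N.

Lemma kappa_factor_before i : (i < k - m)%N -> kappa_factor F G m i = fun=> 1.
Proof. by rewrite /kappa_factor => ->. Qed.

Lemma kappa_factor_start : kappa_factor F G m (k - m) = F.
Proof. by rewrite /kappa_factor ltnn eqxx. Qed.

Lemma kappa_factor_window i : (k - m < i < k)%N ->
  kappa_factor F G m i = fun b => (~~ blockZ b)%:R.
Proof. by move=> /andP[lt_mi lt_ik]; rewrite /kappa_factor ltnNge ltnW // gtn_eqF // lt_ik. Qed.

Lemma kappa_factor_end : kappa_factor F G m k = G.
Proof.
rewrite /kappa_factor ltnn ltnNge leq_subr /=.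
by rewrite (_ : (k == k - m)%N = false) //; apply/negbTE; lia.
Qed.

Lemma prod_kappa_factor (w : outcome k T) :
  \prod_(i < k.+1) kappa_factor F G m i (block w i) =
  F (block w (k - m)) * (all (fun i => ~~ Zb w i) (index_iota (k - m).+1 k))%:R * G (block w k).
Proof.
rewrite (@prod_ord_split _ (fun i => kappa_factor F G m i (block w i)) (k - m)); last 2 first.
- lia.
- by move=> i /kappa_factor_before ->.
rewrite kappa_factor_start kappa_factor_end -big_all natr_bigand.
by congr (_ * _ * _); apply: eq_big_nat => i /kappa_factor_window ->; rewrite Zb_block.
Qed.

Lemma expect_kappa_factor :
  \prod_(i < k.+1) Eblock (pb p i) (kappa_factor F G m i) =
  Eblock (pb p (k - m)) F * \prod_((k - m).+1 <= i < k) qb p i ^+ T * Eblock (pb p k) G.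
Proof.
rewrite (@prod_ord_split _ (fun i => Eblock (pb p i) (kappa_factor F G m i)) (k - m)); last 2 first.
- lia.
- by move=> i /kappa_factor_before ->; rewrite Eblock1.
rewrite kappa_factor_start kappa_factor_end.
by congr (_ * _ * _); apply: eq_big_nat => i /kappa_factor_window ->; rewrite Eblock_notZ.
Qed.

End KappaFactor.

Lemma kappa_bounds (w : outcome k T) : (0 < k)%N -> (1 <= kappa w <= k)%N.
Proof.
move=> k_gt0; have := find_size id [seq Zb w (k - m) | m <- iota 1 k.-1].
by rewrite size_map size_iota /kappa; lia.
Qed.

Lemma peak_latency_split (w : outcome k T) : (0 < k)%N -> Zb w 0 ->
  (Zb w k)%:R * (peak_latency w)%:R =
  \sum_(1 <= m < k.+1) ((T * m.-1 + 1)%N%:R * \prod_(i < k.+1) kappa_factor Zr Zr m i (block w i)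
    + \prod_(i < k.+1) kappa_factor ZWr Zr m i (block w i)
    + \prod_(i < k.+1) kappa_factor Zr ZXr m i (block w i)).
Proof.
move=> k_gt0 Z0.
transitivity (\sum_(1 <= m < k.+1) (kappa w == m)%:R *
    ((Zb w k)%:R * ((T * m.-1 + 1)%N%:R + (Wb w (k - m))%:R + (Xb w k)%:R)) : R).
  by rewrite sum_indicator ?kappa_bounds // /peak_latency !natrD; ring.
apply: eq_big_nat => m m_range.
rewrite !prod_kappa_factor // kappa_eq // -mulnb natrM -!Zb_block -Wb_block -Xb_block.
ring.
Qed.

Lemma eq_Eout_support F G : (0 < T)%N ->
  (forall w, Zb w 0 -> F w = G w) -> Eout F = Eout G.
Proof.
move=> T_gt0 eqFG; apply: eq_bigr => w _.
by have [/eqFG->|/(weight_eq0 T_gt0)->] := boolP (Zb w 0); rewrite ?mul0r.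
Qed.

Lemma numerator_factor : (0 < T)%N -> (0 < k)%N ->
  \sum_(w : outcome k T | Zb w k) weight p w * (peak_latency w)%:R =
  \sum_(1 <= m < k.+1) ((T * m.-1 + 1)%N%:R * \prod_(i < k.+1) Eblock (pb p i) (kappa_factor Zr Zr m i)
    + \prod_(i < k.+1) Eblock (pb p i) (kappa_factor ZWr Zr m i)
    + \prod_(i < k.+1) Eblock (pb p i) (kappa_factor Zr ZXr m i)).
Proof.
move=> T_gt0 k_gt0.
transitivity (Eout (fun w => (Zb w k)%:R * (peak_latency w)%:R)).
  rewrite big_mkcond; apply: eq_bigr => w _.
  by case: (Zb w k); rewrite ?mul1r ?mul0r ?mulr0.
rewrite (eq_Eout_support T_gt0 (fun w => peak_latency_split k_gt0)) expectation_sum.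
by apply: eq_big_nat => m _; rewrite !expectationD expectationZl !expect_blocks.
Qed.

Lemma denominator_factor : \sum_(w : outcome k T | Zb w k) weight p w = 1 - qb p k ^+ T.
Proof.
pose F i := if i == k then Zr else fun=> 1.
have F_before (i : 'I_k) : F (widen_ord (leqnSn k) i) = fun=> 1.
  by rewrite /F /= ltn_eqF.
transitivity (Eout (fun w => \prod_(i < k.+1) F i (block w i))).
  rewrite big_mkcond; apply: eq_bigr => w _.
  rewrite big_ord_recr big1 => [|i _] /=; last by rewrite F_before.
  by rewrite /F eqxx mul1r -Zb_block; case: (Zb w k); rewrite ?mulr1 ?mulr0.
rewrite expect_blocks big_ord_recr big1 => [|i _] /=; last by rewrite F_before Eblock1.
by rewrite /F eqxx mul1r Eblock_Z.
Qed.

End Outcomes.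

Lemma peak_latency_closed_form (R : fieldType) (T k : nat) (Q r : nat -> R) :
  (0 < k)%N -> Q 0%N = 0 -> 1 - Q k != 0 ->
  (\sum_(1 <= m < k.+1)
      ((T * m.-1 + 1)%N%:R * ((1 - Q (k - m)%N) * \prod_((k - m).+1 <= i < k) Q i * (1 - Q k))
       + ((1 - Q (k - m)%N) * r (k - m)%N - T%:R * Q (k - m)%N)
           * \prod_((k - m).+1 <= i < k) Q i * (1 - Q k)
       + (1 - Q (k - m)%N) * \prod_((k - m).+1 <= i < k) Q i * ((1 - Q k) * r k - T%:R * Q k)))
    / (1 - Q k) =
  \sum_(1 <= m < k.+1)
      (1 - Q (k - m)%N) * \prod_((k - m).+1 <= i < k) Q i * (r (k - m)%N + T%:R * m%:R)
  - T%:R * (\sum_(1 <= m < k.+1) \prod_(k - m <= i < k) Q i)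
  - T%:R + (r k - T%:R * Q k / (1 - Q k)) + 1.
Proof.
move=> k_gt0 Q0 D_neq0.
have tail_sum : \sum_(1 <= m < k.+1) (1 - Q (k - m)%N) * \prod_((k - m).+1 <= i < k) Q i = 1.
  by rewrite telescope_prod_tail big_ltn // Q0 mul0r subr0.
rewrite (@eq_big_nat _ _ _ 1 k.+1 (fun m => \prod_(k - m <= i < k) Q i)
  (fun m => Q (k - m)%N * \prod_((k - m).+1 <= i < k) Q i)); last first.
  by move=> m /andP[m_gt0 _]; rewrite big_ltn //; lia.
rewrite (@eq_big_nat _ _ _ 1 k.+1 _ (fun m =>
    (1 - Q k) * ((1 - Q (k - m)%N) * \prod_((k - m).+1 <= i < k) Q i * (r (k - m)%N + T%:R * m%:R)
                 - T%:R * (Q (k - m)%N * \prod_((k - m).+1 <= i < k) Q i))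
    + ((1 - Q k) * (1 - T%:R + r k) - T%:R * Q k)
      * ((1 - Q (k - m)%N) * \prod_((k - m).+1 <= i < k) Q i))); last first.
  move=> m /andP[m_gt0 _].
  have -> : (T * m.-1 + 1)%N%:R = T%:R * m%:R - T%:R + 1 :> R.
    by case: m m_gt0 => // m _; rewrite /= natrD natrM -addn1 natrD; ring.
  ring.
rewrite big_split /= -!mulr_sumr sumrB -mulr_sumr tail_sum.
by field.
Qed.

Theorem theorem2 (R : realFieldType) (T k : nat) (p : nat -> R)
  (hT : (0 < T)%N) (hk : (0 < k)%N)
  (hp : forall i : nat, (1 <= i <= k)%N -> 0 < p i <= 1) :
  Theta_pl p k T =
    \sum_(1 <= kap < k.+1)
        (1 - qb p (k - kap) ^+ T)
        * (\prod_((k - kap).+1 <= i < k) qb p i ^+ T)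
        * (qb p (k - kap) / pb p (k - kap) + T%:R * kap%:R)
    - T%:R * (\sum_(1 <= kap < k.+1) \prod_(k - kap <= i < k) qb p i ^+ T)
    - T%:R
    + (qb p k / pb p k - T%:R * qb p k ^+ T / (1 - qb p k ^+ T))
    + 1.
Proof.
have pb_neq0 i : (i <= k)%N -> pb p i != 0.
  rewrite /pb; case: ifP => [_ _|/negbT i_neq0 le_ik]; first exact: oner_neq0.
  by have /andP[/gt_eqF-> _] := hp i ltac:(lia).
have PZk_neq0 : 1 - qb p k ^+ T != 0.
  have /andP[pk_gt0 pk_le1] := hp k ltac:(lia).
  rewrite /qb /pb gtn_eqF // subr_eq0 eq_sym lt_eqF // exprn_ilt1 -?lt0n //.
    by rewrite subr_ge0.
  by rewrite gtrBl.
have q0T : qb p 0 ^+ T = 0 by rewrite /qb /pb eqxx subrr expr0n gtn_eqF.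
rewrite /Theta_pl numerator_factor // denominator_factor.
under eq_big_nat => m /andP[m_gt0 m_le_k] do rewrite !expect_kappa_factor ?m_gt0 //
  !Eblock_Z Eblock_ZW ?Eblock_ZX ?pb_neq0 ?leq_subr //.
exact: (@peak_latency_closed_form R T k (fun i => qb p i ^+ T) (fun i => qb p i / pb p i)
  hk q0T PZk_neq0).
Qed.
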